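(* Let $F$ be a field of characteristic $2$. Every separated symplectic quadratic space $(V,q,q')$ over $F$ decomposes as $(V,q,q')\simeq\varphi_{an}\perp\mu_1\perp\dots\perp\mu_n$ ($n\ge0$), where $\varphi_{an}$ is an anisotropic separated symplectic quadratic space which is uniquely determined up to isometry, and each $\mu_i$ is a one-dimensional metabolic separated symplectic quadratic space. Moreover, if $(V,q,q')$ is metabolic then $\varphi_{an}=0$.
   Context: A separated symplectic quadratic space over $F$ is a triple $(V,q,q')$ with $V$ a finite-dimensional $F$-vector space, $q$ a totally singular quadratic form on $V$ and $q'$ a totally singular quadratic form on $V^*$ (totally singular: $Q(\lambda x)=\lambda^2Q(x)$ and $Q(x+y)=Q(x)+Q(y)$). Isometry: a linear isomorphism $L\colon V_1\to V_2$ with $q_2\circ L=q_1$ and $q_1'\circ L^*=q_2'$. Orthogonal sum: $(V_1\oplus V_2,q_1\perp q_2,q_1'\perp q_2')$ with $(V_1\oplus V_2)^*=V_1^*\oplus V_2^*$. The space is isotropic if $q$ or $q'$ has a nonzero zero, anisotropic otherwise. It is metabolic if there is a subspace $U\subset V$ (any dimension) with $q(U)=0$ and $q'(U^o)=0$, where $U^o\subset V^*$ is the annihilator of $U$. $0$ denotes the space with $V=0$. *)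

From HB Require Import structures.
From mathcomp Require Import all_boot all_order all_algebra.
Set Implicit Arguments. Unset Strict Implicit. Unset Printing Implicit Defensive.
Import GRing.Theory.
Local Open Scope ring_scope.

(* Finite-dimensional F-vector spaces are represented in coordinates as
   'rV[F]_n; the dual V^* is identified with 'rV[F]_n via the pairing
   <x, w> = x *m w^T. *)

Definition tsing (F : fieldType) (n : nat) (Q : 'rV[F]_n -> F) : Prop :=
  (forall (l : F) x, Q (l *: x) = l ^+ 2 * Q x) /\
  (forall x y, Q (x + y) = Q x + Q y).

Record ssqs (F : fieldType) := SSQS {
  sdim : nat;
  sq : 'rV[F]_sdim -> F;
  sqd : 'rV[F]_sdim -> F }.   (* q' on V^* *)
Arguments sdim {F}. Arguments sq {F}. Arguments sqd {F}.

Definition is_ssqs (F : fieldType) (S : ssqs F) : Prop :=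
  tsing (sq S) /\ tsing (sqd S).

(* Isometry: a linear isomorphism L : V1 -> V2 (x |-> x *m A) with
   q2 o L = q1 and q1' o L^* = q2', where L^* (w) = w *m A^T. *)
Definition isometric (F : fieldType) (S1 S2 : ssqs F) : Prop :=
  exists A : 'M[F]_(sdim S1, sdim S2),
    [/\ row_free A, row_full A,
        (forall x, sq S2 (x *m A) = sq S1 x) &
        (forall w, sqd S1 (w *m A^T) = sqd S2 w)].

(* Orthogonal sum, with (V1 + V2)^* = V1^* + V2^* *)
Definition osum (F : fieldType) (S1 S2 : ssqs F) : ssqs F :=
  @SSQS F (sdim S1 + sdim S2)
    (fun x => sq S1 (lsubmx x) + sq S2 (rsubmx x))
    (fun w => sqd S1 (lsubmx w) + sqd S2 (rsubmx w)).

Definition osum_list (F : fieldType) (phi : ssqs F) (mus : seq (ssqs F)) :=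
  foldl (@osum F) phi mus.

Definition zero_space (F : fieldType) : ssqs F :=
  @SSQS F 0 (fun _ => 0) (fun _ => 0).

Definition anisotropic (F : fieldType) (S : ssqs F) : Prop :=
  (forall x, sq S x = 0 -> x = 0) /\ (forall w, sqd S w = 0 -> w = 0).

(* Metabolic: a subspace U (row space of a matrix) with q(U) = 0 and
   q'(U^o) = 0, U^o the annihilator of U in V^*. *)
Definition metabolic (F : fieldType) (S : ssqs F) : Prop :=
  exists U : 'M[F]_(sdim S),
    (forall u : 'rV_(sdim S), (u <= U)%MS -> sq S u = 0) /\
    (forall w : 'rV_(sdim S),
        (forall u : 'rV_(sdim S), (u <= U)%MS -> u *m w^T = 0) ->
        sqd S w = 0).

Definition decomposition (F : fieldType) (S phi : ssqs F) (mus : seq (ssqs F)) :=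
  [/\ is_ssqs phi, anisotropic phi,
      (forall i, (i < size mus)%N ->
         let mu := nth phi mus i in [/\ is_ssqs mu, sdim mu = 1%N & metabolic mu]) &
      isometric S (osum_list phi mus)].

From HB Require Import structures.
From mathcomp Require Import all_boot all_order all_algebra.
From mathcomp Require Import zify.
From Stdlib Require Import Classical.
Set Implicit Arguments. Unset Strict Implicit. Unset Printing Implicit Defensive.
Import GRing.Theory.
Local Open Scope ring_scope.

(* An isotropic vector of q or q' spans a line that splits off as a
   one-dimensional metabolic summand, since the zeros of a totally singular
   form make up a subspace; induction on the dimension gives a decomposition.

   Let W be the annihilator in V of the zeros of q'.  A metabolic summand has
   q = 0 on its part of W, so for S ~ phi _|_ mu_1 _|_ ... _|_ mu_n the
   projection P onto phi satisfies q' o P^* = q'_phi and q = q_phi o P on W.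
   Anisotropy of phi makes P map W onto V_phi, with a section R.  For a second
   decomposition with projection P2, R P2 is an injective isometric map
   phi -> phi2; with the map in the other direction, it is an isometry.  If S
   is metabolic, then q = 0 on W, so q_phi = q o R vanishes and phi = 0. *)

Section RowSpaces.
Variable F : fieldType.

Lemma ltn_rank_col_mx m n (K : 'M[F]_(m, n)) (v : 'rV_n) :
  ~~ (v <= K)%MS -> (\rank K < \rank (col_mx K v))%N.
Proof.
move=> vNK; rewrite -(addsmxE K v).1; apply: rank_ltmx.
rewrite ltmxE addsmxSl /=; apply: contra vNK.
exact: submx_trans (addsmxSr K v).
Qed.

Lemma row_span_closed n (P : 'rV[F]_n -> Prop) m (K : 'M_(m, n)) :
  P 0 -> (forall a x y, P x -> P y -> P (a *: x + y)) ->
  (forall i, P (row i K)) -> forall v, (v <= K)%MS -> P v.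
Proof.
move=> P0 Plin PK _ /submxP [z ->]; rewrite mulmx_sum_row.
elim/big_ind: _ => // [x y Px Py|i _]; first by rewrite -[x]scale1r; apply: Plin.
by rewrite -[_ *: _]addr0; apply: Plin.
Qed.

Lemma subspace_row_span n (P : 'rV[F]_n -> Prop) :
  P 0 -> (forall a x y, P x -> P y -> P (a *: x + y)) ->
  exists m (K : 'M_(m, n)), forall v, P v <-> (v <= K)%MS.
Proof.
move=> P0 Plin.
suff [m [K [PK KP]]] : exists m (K : 'M_(m, n)),
    (forall i, P (row i K)) /\ forall v, P v -> (v <= K)%MS.
  by exists m, K => v; split; [apply: KP | apply: row_span_closed].
suff grow d m (K : 'M_(m, n)) : (n - \rank K < d)%N -> (forall i, P (row i K)) ->
    exists m' (K' : 'M_(m', n)),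
      (forall i, P (row i K')) /\ forall v, P v -> (v <= K')%MS.
  by apply: (grow n.+1 0%N 0) => [|[]]; rewrite ?ltnS ?leq_subr.
elim: d m K => [|d IH] m K; first by rewrite ltn0.
move=> rankK PK.
case: (classic (forall v, P v -> (v <= K)%MS)) => [KP|]; first by exists m, K.
move=> /(not_all_ex_not _ _) [v /(@imply_to_and (P v)) [Pv /negP vNK]].
apply: (IH _ (col_mx K v)).
  by have := ltn_rank_col_mx vNK; have := rank_leq_col (col_mx K v); lia.
by move=> i; case: (split_ordP i) => j ->; rewrite ?rowKu ?rowKd ?row_id.
Qed.

Lemma submx_annihilator p q s (C : 'M[F]_(p, q)) (R : 'M_(s, q)) :
  (forall w : 'rV_q, C *m w^T = 0 -> R *m w^T = 0) -> (R <= C)%MS.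
Proof.
move=> CR; rewrite submxE; apply/eqP/trmx_inj/row_matrixP => j.
have /CR : C *m (row j (cokermx C)^T)^T = 0.
  by apply: trmx_inj; rewrite trmx_mul trmxK -row_mul -trmx_mul mulmx_coker !trmx0 row0.
by move=> /(congr1 trmx); rewrite trmx_mul trmxK trmx0 -row_mul -trmx_mul trmx0 row0.
Qed.

Lemma tsing0 n (Q : 'rV[F]_n -> F) : tsing Q -> Q 0 = 0.
Proof. by case=> QZ _; rewrite -(scale0r (0 : 'rV_n)) QZ expr2 !mul0r. Qed.

Lemma tsingN n (Q : 'rV[F]_n -> F) x : tsing Q -> Q (- x) = Q x.
Proof. by case=> QZ _; rewrite -scaleN1r QZ expr2 mulN1r opprK mul1r. Qed.

Lemma tsing_mulmx n p (Q : 'rV[F]_n -> F) (B : 'M_(p, n)) :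
  tsing Q -> tsing (fun y => Q (y *m B)).
Proof.
case=> QZ QD; split=> [a x|x y]; first by rewrite -scalemxAl QZ.
by rewrite mulmxDl QD.
Qed.

Lemma tsing_zeros_row_span n (Q : 'rV[F]_n -> F) : tsing Q ->
  exists m (K : 'M_(m, n)), forall v, Q v = 0 <-> (v <= K)%MS.
Proof.
move=> [QZ QD]; apply: subspace_row_span; first exact: tsing0.
by move=> a x y Qx Qy; rewrite QD QZ Qx Qy mulr0 addr0.
Qed.

End RowSpaces.

Section Annihilator.
Variable F : fieldType.
Implicit Types S T : ssqs F.

Definition isometric_map S T (A : 'M[F]_(sdim S, sdim T)) :=
  (forall x, sq T (x *m A) = sq S x) /\ (forall w, sqd S (w *m A^T) = sqd T w).

Definition ann_qd_zeros S (x : 'rV_(sdim S)) :=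
  forall w, sqd S w = 0 -> x *m w^T = 0.

Lemma ann_qd_zerosB S (x y : 'rV_(sdim S)) :
  ann_qd_zeros x -> ann_qd_zeros y -> ann_qd_zeros (x - y).
Proof. by move=> Ax Ay w qw; rewrite mulmxBl Ax // Ay // subr0. Qed.

Lemma isometric_map_ann S T A (x : 'rV_(sdim S)) :
  @isometric_map S T A -> ann_qd_zeros x -> ann_qd_zeros (x *m A).
Proof.
move=> [_ qdA] Ax w qw; rewrite -mulmxA -[A *m w^T]trmxK trmx_mul trmxK.
by apply: Ax; rewrite qdA.
Qed.

Lemma isometric_mapM S1 S2 S3 A B :
  @isometric_map S1 S2 A -> @isometric_map S2 S3 B -> isometric_map (A *m B).
Proof.
move=> [qA qdA] [qB qdB]; split=> [x|w]; first by rewrite mulmxA qB qA.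
by rewrite trmx_mul mulmxA qdA qdB.
Qed.

Lemma qd_zero_of_ann S (d : 'rV_(sdim S)) : is_ssqs S ->
  (forall x, ann_qd_zeros x -> x *m d^T = 0) -> sqd S d = 0.
Proof.
move=> [_ qdS] dA; have [m [K KE]] := tsing_zeros_row_span qdS.
apply/KE/submx_annihilator => w Kw.
suff /dA wd : ann_qd_zeros w by rewrite -[d *m _]trmxK trmx_mul trmxK wd trmx0.
move=> v /KE /submxP [z ->].
by rewrite trmx_mul mulmxA -[w *m _]trmxK trmx_mul trmxK Kw trmx0 mul0mx.
Qed.

(* If q'(U^o) = 0 then the annihilator of the zeros of q' lies in U^oo = U. *)
Lemma metabolic_q_ann S (x : 'rV_(sdim S)) :
  metabolic S -> ann_qd_zeros x -> sq S x = 0.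
Proof.
move=> [U [qU qdU]] Ax; apply/qU/submx_annihilator => w Uw; apply/Ax/qdU.
by move=> u /submxP [z ->]; rewrite -mulmxA Uw mulmx0.
Qed.

End Annihilator.

Section CoreProjection.
Variable F : fieldType.
Implicit Types S T : ssqs F.

Definition core_projection T phi (P : 'M[F]_(sdim T, sdim phi)) :=
  (forall u, sqd T (u *m P^T) = sqd phi u) /\
  (forall x, ann_qd_zeros x -> sq T x = sq phi (x *m P)).

(* Anisotropy of q'_phi makes P^T injective modulo the zeros of q'_T; dually,
   P maps the annihilator of these zeros onto V_phi. *)
Lemma core_projection_section T phi P : is_ssqs T -> anisotropic phi ->
  @core_projection T phi P ->
  exists R : 'M_(sdim phi, sdim T), R *m P = 1%:M /\ forall y, ann_qd_zeros (y *m R).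
Proof.
move=> [_ qdT] [_ qdphi] [qdP _]; have [m [K KE]] := tsing_zeros_row_span qdT.
have : (row_mx 1%:M (0 : 'M_(sdim phi, m)) <= row_mx P K^T)%MS.
  apply: submx_annihilator => w; rewrite -[w]hsubmxK !tr_row_mx !mul_row_col.
  rewrite mul0mx addr0 mul1mx; set u := lsubmx w; set v := rsubmx w => PKw.
  have uP : u *m P^T = - (v *m K).
    apply/eqP; rewrite -addr_eq0 -[_ + _]trmxK raddfD /= !trmx_mul !trmxK PKw.
    by rewrite trmx0.
  suff -> : u = 0 by rewrite trmx0.
  by apply: qdphi; rewrite -qdP uP tsingN //; apply/KE/submxMl.
case/submxP=> R; rewrite mul_mx_row => /eq_row_mx [RP RK].
exists R; split=> [|y w /KE /submxP [z ->]]; first by rewrite RP.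
by rewrite trmx_mul -!mulmxA (mulmxA R) -RK mul0mx mulmx0.
Qed.

Lemma core_projection_mulmx S T phi (A : 'M[F]_(sdim S, sdim T)) P :
  isometric_map A -> @core_projection T phi P -> core_projection (A *m P).
Proof.
move=> [qA qdA] [qdP qP]; split=> [u|x Ax].
  by rewrite trmx_mul mulmxA qdA qdP.
by rewrite -qA qP ?mulmxA //; apply: isometric_map_ann.
Qed.

Section Transfer.
Variables (T phi1 phi2 : ssqs F) (R1 : 'M[F]_(sdim phi1, sdim T)).
Variables (P1 : 'M[F]_(sdim T, sdim phi1)) (P2 : 'M[F]_(sdim T, sdim phi2)).
Hypotheses (TS : is_ssqs T) (phi1S : is_ssqs phi1) (phi2A : anisotropic phi2).
Hypotheses (P1core : core_projection P1) (P2core : core_projection P2).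
Hypotheses (R1P1 : R1 *m P1 = 1%:M) (R1ann : forall y, ann_qd_zeros (y *m R1)).

Lemma transfer_q y : sq phi2 (y *m (R1 *m P2)) = sq phi1 y.
Proof. by rewrite mulmxA -P2core.2 // P1core.2 // -mulmxA R1P1 mulmx1. Qed.

Lemma transfer_kernel x : ann_qd_zeros x -> x *m P1 = 0 -> x *m P2 = 0.
Proof.
by move=> Ax xP1; apply: phi2A.1; rewrite -P2core.2 // P1core.2 // xP1 (tsing0 phi1S.1).
Qed.

(* q'_T vanishes on u P2^T - u (R1 P2)^T P1^T, since this vector is orthogonal
   to the annihilator of the zeros of q'_T. *)
Lemma transfer_qd u : sqd phi1 (u *m (R1 *m P2)^T) = sqd phi2 u.
Proof.
set w := u *m P2^T; set u1 := w *m R1^T.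
have -> : u *m (R1 *m P2)^T = u1 by rewrite /u1 /w trmx_mul mulmxA.
have qd_rest : sqd T (w - u1 *m P1^T) = 0.
  apply: qd_zero_of_ann => // x Ax.
  have /transfer_kernel : ann_qd_zeros (x - x *m P1 *m R1).
    exact/ann_qd_zerosB/R1ann.
  rewrite mulmxBl -(mulmxA _ R1) R1P1 mulmx1 subrr => /(_ erefl) xP2.
  by rewrite raddfB /= mulmxBr /u1 /w !trmx_mul !trmxK !mulmxA -!mulmxBl xP2 mul0mx.
by rewrite -P2core.1 -/w -(subrK (u1 *m P1^T) w) TS.2.2 qd_rest add0r P1core.1.
Qed.

End Transfer.

Lemma core_projection_transfer T phi1 phi2
    (P1 : 'M[F]_(sdim T, sdim phi1)) (P2 : 'M_(sdim T, sdim phi2)) :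
  is_ssqs T -> is_ssqs phi1 -> is_ssqs phi2 -> anisotropic phi1 -> anisotropic phi2 ->
  core_projection P1 -> core_projection P2 ->
  exists L : 'M_(sdim phi1, sdim phi2), isometric_map L /\ row_free L.
Proof.
move=> TS phi1S phi2S phi1A phi2A P1core P2core.
have [R1 [R1P1 R1ann]] := core_projection_section TS phi1A P1core.
have qL := transfer_q P1core P2core R1P1 R1ann.
have qdL := transfer_qd TS phi1S phi2A P1core P2core R1P1 R1ann.
exists (R1 *m P2); split=> //.
rewrite -kermx_eq0; apply/eqP/row_matrixP => i; rewrite row0.
by apply: phi1A.1; rewrite -qL -row_mul mulmx_ker row0 (tsing0 phi2S.1).
Qed.

End CoreProjection.

Section OrthogonalSum.
Variable F : fieldType.
Implicit Types S T phi mu : ssqs F.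

Lemma tsing_osum m n (Q1 : 'rV[F]_m -> F) (Q2 : 'rV[F]_n -> F) :
  tsing Q1 -> tsing Q2 -> tsing (fun x => Q1 (lsubmx x) + Q2 (rsubmx x)).
Proof.
move=> [Q1Z Q1D] [Q2Z Q2D]; split=> [a x|x y].
  by rewrite !linearZ /= Q1Z Q2Z mulrDr.
by rewrite !linearD /= Q1D Q2D addrACA.
Qed.

Lemma is_ssqs_osum S1 S2 : is_ssqs S1 -> is_ssqs S2 -> is_ssqs (osum S1 S2).
Proof. by move=> [? ?] [? ?]; split; apply: tsing_osum. Qed.

Lemma ann_qd_zeros_osum S1 S2 (x : 'rV_(sdim (osum S1 S2))) :
  is_ssqs S1 -> is_ssqs S2 -> ann_qd_zeros x ->
  ann_qd_zeros (lsubmx x : 'rV_(sdim S1)) /\ ann_qd_zeros (rsubmx x : 'rV_(sdim S2)).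
Proof.
move=> [_ qd1] [_ qd2] Ax; split=> w qw.
  have := Ax (row_mx w 0); rewrite /= row_mxKl row_mxKr qw (tsing0 qd2) addr0.
  by rewrite -{1}(hsubmxK x) tr_row_mx mul_row_col trmx0 mulmx0 addr0 => ->.
have := Ax (row_mx 0 w); rewrite /= row_mxKl row_mxKr qw (tsing0 qd1) addr0.
by rewrite -{1}(hsubmxK x) tr_row_mx mul_row_col trmx0 mulmx0 add0r => ->.
Qed.

Lemma core_projection_osum T phi mu (P : 'M_(sdim T, sdim phi)) :
  is_ssqs T -> is_ssqs mu -> metabolic mu -> core_projection P ->
  core_projection (col_mx P 0 : 'M_(sdim (osum T mu), sdim phi)).
Proof.
move=> TS muS muM [qdP qP]; split=> [u|x Ax].
  rewrite /= tr_col_mx trmx0 mul_mx_row mulmx0 row_mxKl row_mxKr qdP.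
  by rewrite (tsing0 muS.2) addr0.
have [Axl Axr] := ann_qd_zeros_osum TS muS Ax.
rewrite /= (metabolic_q_ann muM Axr) addr0 qP //.
by rewrite -{2}(hsubmxK x) mul_row_col mulmx0 addr0.
Qed.

Lemma core_projection_osum_list phi mus : is_ssqs phi ->
  (forall i, (i < size mus)%N -> is_ssqs (nth phi mus i) /\ metabolic (nth phi mus i)) ->
  is_ssqs (osum_list phi mus) /\
  exists P : 'M[F]_(sdim (osum_list phi mus), sdim phi), core_projection P.
Proof.
move=> phiS; elim/last_ind: mus => [|mus mu IH] musM.
  by split=> //; exists 1%:M; split=> [u|x _]; rewrite /= ?trmx1 mulmx1.
rewrite /osum_list foldl_rcons -/(osum_list phi mus).
have [muS muM] : is_ssqs mu /\ metabolic mu.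
  by have := musM (size mus); rewrite size_rcons nth_rcons ltnn eqxx; apply.
have musM' i : (i < size mus)%N -> is_ssqs (nth phi mus i) /\ metabolic (nth phi mus i).
  by move=> ltimus; have := musM i; rewrite size_rcons nth_rcons ltimus; apply; apply: ltnW.
have [TS [P Pcore]] := IH musM'.
split; first exact: is_ssqs_osum.
by exists (col_mx P 0); apply: core_projection_osum.
Qed.

Lemma decomposition_core_projection S phi mus : decomposition S phi mus ->
  exists P : 'M[F]_(sdim S, sdim phi), core_projection P.
Proof.
move=> [phiS _ musM [A [_ _ qA qdA]]].
have musM' i : (i < size mus)%N -> is_ssqs (nth phi mus i) /\ metabolic (nth phi mus i).
  by move=> /musM [].
have [_ [P Pcore]] := core_projection_osum_list phiS musM'.
by exists (A *m P); apply: core_projection_mulmx.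
Qed.

End OrthogonalSum.

Section Isometry.
Variable F : fieldType.
Implicit Types S T phi mu : ssqs F.

Lemma isometricP S T : isometric S T <->
  exists (A : 'M[F]_(sdim S, sdim T)) R L,
    [/\ A *m R = 1%:M, L *m A = 1%:M & isometric_map A].
Proof.
split=> [[A [/row_freeP [R AR] /row_fullP [L LA] qA qdA]]|[A [R [L [AR LA [qA qdA]]]]]].
  by exists A, R, L.
by exists A; split=> //; [apply/row_freeP; exists R | apply/row_fullP; exists L].
Qed.

Lemma isometric_refl S : isometric S S.
Proof.
apply/isometricP; exists 1%:M, 1%:M, 1%:M; rewrite mulmx1.
by split=> //; split=> ?; rewrite ?trmx1 mulmx1.
Qed.

Lemma isometric_trans S1 S2 S3 :
  isometric S1 S2 -> isometric S2 S3 -> isometric S1 S3.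
Proof.
move=> /isometricP [A [R [L [AR LA isoA]]]] /isometricP [B [R' [L' [BR LB isoB]]]].
apply/isometricP; exists (A *m B), (R' *m R), (L' *m L); split.
- by rewrite mulmxA -(mulmxA A) BR mulmx1 AR.
- by rewrite mulmxA -(mulmxA L') LA mulmx1 LB.
exact: isometric_mapM isoB.
Qed.

Lemma isometric_osuml S1 S2 mu :
  isometric S1 S2 -> isometric (osum S1 mu) (osum S2 mu).
Proof.
move=> /isometricP [A [R [L [AR LA [qA qdA]]]]]; apply/isometricP.
exists (block_mx A 0 0 1%:M), (block_mx R 0 0 1%:M), (block_mx L 0 0 1%:M).
split; rewrite ?mulmx_block ?AR ?LA ?mulmx0 ?mul0mx ?mulmx1 ?addr0 ?add0r
  -?scalar_mx_block //.
split=> [x|w] /=; last rewrite tr_block_mx !trmx0 trmx1.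
  by rewrite -[x]hsubmxK mul_row_block !mulmx0 mulmx1 addr0 add0r !row_mxKl !row_mxKr qA.
by rewrite -[w]hsubmxK mul_row_block !mulmx0 mulmx1 addr0 add0r !row_mxKl !row_mxKr qdA.
Qed.

Lemma isometric_of_row_free phi1 phi2 (L : 'M[F]_(sdim phi1, sdim phi2))
    (L' : 'M[F]_(sdim phi2, sdim phi1)) :
  isometric_map L -> row_free L -> row_free L' -> isometric phi1 phi2.
Proof.
move=> [qL qdL] freeL freeL'; exists L; split=> //.
rewrite /row_full eqn_leq rank_leq_col (eqP freeL).
by rewrite -(eqP freeL') rank_leq_col.
Qed.

End Isometry.

Section Splitting.
Variable F : fieldType.
Implicit Types S T : ssqs F.

(* V in the basis formed by the rows of A, whose dual basis consists of the
   rows of N (N^T A = 1): the first r coordinates and the last one. *)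
Definition split_head S r (A N : 'M[F]_(r + 1, sdim S)) : ssqs F :=
  @SSQS F r (fun y => sq S (y *m usubmx A)) (fun v => sqd S (v *m usubmx N)).

Definition split_line S r (A N : 'M[F]_(r + 1, sdim S)) : ssqs F :=
  @SSQS F 1 (fun t => sq S (t *m dsubmx A)) (fun s => sqd S (s *m dsubmx N)).

Lemma isometric_split S r (A N : 'M[F]_(r + 1, sdim S)) :
  is_ssqs S -> N^T *m A = 1%:M -> (r + 1 = sdim S)%N ->
  [/\ is_ssqs (split_head A N), is_ssqs (split_line A N) &
      isometric S (osum (split_head A N) (split_line A N))].
Proof.
move=> [qS qdS] NA rS; split; try by split; apply: tsing_mulmx.
have rankN : \rank N^T = sdim S.
  apply/eqP; rewrite eqn_leq rank_leq_row /=.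
  by have := mxrankM_maxl N^T A; rewrite NA mxrank1.
exists (N^T : 'M_(sdim S, sdim (osum (split_head A N) (split_line A N)))); split.
- by rewrite /row_free rankN.
- by rewrite /row_full rankN /= rS.
- by move=> x /=; rewrite -qS.2 -mul_row_col hsubmxK vsubmxK -mulmxA NA mulmx1.
- by move=> w /=; rewrite -qdS.2 -mul_row_col hsubmxK vsubmxK trmxK.
Qed.

Lemma metabolic_of_q_eq0 S : is_ssqs S -> (forall x, sq S x = 0) -> metabolic S.
Proof.
move=> [_ qdS] q0; exists 1%:M; split=> // w wU.
suff -> : w = 0 by apply: tsing0.
apply/trmx_inj/row_matrixP => i; rewrite trmx0 row0 -[w^T]mul1mx row_mul.
exact/wU/submx1.
Qed.

Lemma metabolic_of_qd_eq0 S : is_ssqs S -> (forall w, sqd S w = 0) -> metabolic S.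
Proof.
move=> [qS _] qd0; exists 0; split=> [u|w _] //.
by rewrite submx0 => /eqP ->; apply: tsing0.
Qed.

Lemma compl_row_full n (x : 'rV[F]_n) : x != 0 ->
  row_full (col_mx (row_base (x^C)%MS) x) /\ (\rank (x^C)%MS + 1 = n)%N.
Proof.
move=> nz_x; split.
  rewrite /row_full -(addsmxE _ _).1 (adds_eqmx (eq_row_base _) (eqmx_refl x)).1.
  by rewrite addsmxC; apply: addsmx_compl_full.
rewrite mxrank_compl rank_rV nz_x subnK //.
by have := rank_leq_col x; rewrite rank_rV nz_x.
Qed.

Definition splits_off_metabolic_line S :=
  exists S' mu, [/\ is_ssqs S', is_ssqs mu, (sdim S' < sdim S)%N,
                    sdim mu = 1%N /\ metabolic mu & isometric S (osum S' mu)].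

Lemma split_off_isotropic S (x : 'rV[F]_(sdim S)) :
  is_ssqs S -> x != 0 -> sq S x = 0 \/ sqd S x = 0 -> splits_off_metabolic_line S.
Proof.
move=> SS nz_x isox; have [/row_fullP [L LB] rS] := compl_row_full nz_x.
set B := col_mx _ x in LB.
have split_with (A N : 'M_(\rank (x^C)%MS + 1, sdim S)) : N^T *m A = 1%:M ->
    (forall t, sq (split_line A N) t = 0) \/ (forall s, sqd (split_line A N) s = 0) ->
    splits_off_metabolic_line S.
  move=> NA line0; have [headS lineS iso] := isometric_split SS NA rS.
  exists (split_head A N), (split_line A N); split=> //; first by rewrite /=; lia.
  by split=> //; case: line0; [apply: metabolic_of_q_eq0 | apply: metabolic_of_qd_eq0].
have scalar1 (Q : 'rV[F]_(sdim S) -> F) : tsing Q -> Q x = 0 ->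
    forall t : 'rV_1, Q (t *m x) = 0.
  by move=> [QZ _] Qx t; rewrite (mx11_scalar t) mul_scalar_mx QZ Qx mulr0.
case: isox => [qx|qdx].
  apply: (split_with B L^T); first by rewrite trmxK.
  by left=> t; rewrite /= col_mxKd; apply: scalar1 SS.1 qx t.
apply: (split_with L^T B); first by rewrite -trmx_mul LB trmx1.
by right=> s; rewrite /= col_mxKd; apply: scalar1 SS.2 qdx s.
Qed.

Lemma not_anisotropic S : ~ anisotropic S ->
  exists x, x != 0 /\ (sq S x = 0 \/ sqd S x = 0).
Proof.
move=> SnA; apply: NNPP => noiso; apply: SnA.
by split=> x qx; apply: NNPP => /eqP nz_x; apply: noiso; exists x; split; auto.
Qed.

Lemma decomposition_exists S : is_ssqs S -> exists phi mus, decomposition S phi mus.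
Proof.
have [n] := ubnP (sdim S); elim: n S => [|n IH] S; first by rewrite ltn0.
move=> ltSn SS.
case: (classic (anisotropic S)) => [SA|/not_anisotropic [x [nz_x isox]]].
  by exists S, [::]; split=> //; exact: isometric_refl.
have [S' [mu [S'S muS ltS' [mu1 muM] isoS]]] := split_off_isotropic SS nz_x isox.
have [phi [mus [phiS phiA musM isoS']]] := IH S' (leq_trans ltS' ltSn) S'S.
exists phi, (rcons mus mu); split=> //.
  move=> i; rewrite size_rcons ltnS leq_eqVlt => /orP [/eqP ->|ltimus].
    by rewrite nth_rcons ltnn eqxx.
  by rewrite nth_rcons ltimus; apply: musM.
rewrite /osum_list foldl_rcons -/(osum_list phi mus).
exact: isometric_trans isoS (isometric_osuml _ isoS').
Qed.

End Splitting.

Section AnisotropicPart.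
Variable F : fieldType.

Lemma anisotropic_part_unique (S phi1 phi2 : ssqs F) mus1 mus2 : is_ssqs S ->
  decomposition S phi1 mus1 -> decomposition S phi2 mus2 -> isometric phi1 phi2.
Proof.
move=> SS dec1 dec2.
have [P1 P1core] := decomposition_core_projection dec1.
have [P2 P2core] := decomposition_core_projection dec2.
case: dec1 dec2 => [phi1S phi1A _ _] [phi2S phi2A _ _].
have [L [isoL freeL]] :=
  core_projection_transfer SS phi1S phi2S phi1A phi2A P1core P2core.
have [L' [_ freeL']] :=
  core_projection_transfer SS phi2S phi1S phi2A phi1A P2core P1core.
exact: isometric_of_row_free isoL freeL freeL'.
Qed.

Lemma core_projection_metabolic (T phi : ssqs F) (P : 'M[F]_(sdim T, sdim phi)) :
  is_ssqs T -> anisotropic phi -> metabolic T -> core_projection P -> sdim phi = 0%N.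
Proof.
move=> TS phiA TM Pcore.
have [R [RP Rann]] := core_projection_section TS phiA Pcore.
have phi0 (y : 'rV[F]_(sdim phi)) : y = 0.
  apply: phiA.1; rewrite -[y]mulmx1 -RP mulmxA -Pcore.2 //.
  exact: metabolic_q_ann.
case: (sdim phi) phi0 => // k /(_ (const_mx 1)) /matrixP /(_ 0 0).
by rewrite !mxE => /eqP; rewrite oner_eq0.
Qed.

End AnisotropicPart.

Theorem proposition2p4 (F : fieldType) (charF : (2%N \in [pchar F]))
  (S : ssqs F) (HS : is_ssqs S) :
  (exists (phi : ssqs F) (mus : seq (ssqs F)), decomposition S phi mus) /\
  (forall (phi1 phi2 : ssqs F) (mus1 mus2 : seq (ssqs F)),
      decomposition S phi1 mus1 -> decomposition S phi2 mus2 ->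
      isometric phi1 phi2) /\
  (metabolic S ->
   forall (phi : ssqs F) (mus : seq (ssqs F)),
     decomposition S phi mus -> sdim phi = 0%N).
Proof.
split; first exact: decomposition_exists.
split=> [phi1 phi2 mus1 mus2|SM phi mus dec]; first exact: anisotropic_part_unique.
have [P Pcore] := decomposition_core_projection dec.
by case: dec => _ phiA _ _; apply: core_projection_metabolic Pcore.
Qed.
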